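(* In the risk-aversion-shock setting, fix $i\in\{1,\dots,N\}$ with $\bar p_{ii}=1$ and $r(G_i)<1$, and let $x_i^*\in[1,\infty)^M$ be the unique fixed point of $F_i$. If $c\in\mathcal C$ satisfies $c(w,z_{ij})/w\ge x_i^*(\tilde z_j)^{-1/\gamma_i}$ for all $w>0$ and all $j\in\{1,\dots,M\}$, then $Tc(w,z_{ij})/w\ge x_i^*(\tilde z_j)^{-1/\gamma_i}$ for all $w>0$ and all $j\in\{1,\dots,M\}$.
   Context: Risk-aversion-shock setting. $\mathsf Z=\bar{\mathsf Z}\times\tilde{\mathsf Z}$ with $\bar{\mathsf Z}=\{\bar z_1,\dots,\bar z_N\}$, $\tilde{\mathsf Z}=\{\tilde z_1,\dots,\tilde z_M\}$; $Z_t=(\bar Z_t,\tilde Z_t)$ where $\{\bar Z_t\}$, $\{\tilde Z_t\}$ are independent Markov chains with transition matrices $\bar P=(\bar p_{ij})$ and $\tilde P=(\tilde p_{jk})$, so $\{Z_t\}$ has transition matrix $P=\bar P\otimes\tilde P$. Write $z_{ij}=(\bar z_i,\tilde z_j)$. $\{\epsilon_t\}_{t\ge1}$ i.i.d. with distribution $\pi$, independent of $\{Z_t\}$; for nonnegative measurable $\beta,R,Y$, $\beta_t=\beta(Z_{t-1},Z_t,\epsilon_t)$, $R_t=R(Z_{t-1},Z_t,\epsilon_t)$, $Y_t=Y(Z_{t-1},Z_t,\epsilon_t)$. Utility: $u(c,z_{ij})=c^{1-\gamma_i}/(1-\gamma_i)$ if $\gamma_i\ne1$ and $\log c$ if $\gamma_i=1$,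 where $0<\gamma_1<\dots<\gamma_N$; $u'(c,z)$ is the derivative in $c$. $\mathbb E_z$: expectation given $Z_0=z$; under $\mathbb E_z$, $\hat Z=Z_1$, $\hat\beta=\beta(z,\hat Z,\epsilon_1)$, $\hat R=R(z,\hat Z,\epsilon_1)$, $\hat Y=Y(z,\hat Z,\epsilon_1)$. Assumption 2 holds: (a) $\mathbb E_zu'(\hat Y,\hat Z)<\infty$ and $\mathbb E_z\hat\beta\hat Ru'(\hat Y,\hat Z)<\infty$ for all $z$; (b) $r(K(1))<1$ ($r$ = spectral radius), $K_{z\hat z}(\theta)=P(z,\hat z)\int\beta(z,\hat z,\epsilon)R(z,\hat z,\epsilon)^\theta\pi(d\epsilon)$. $S_0=(0,\infty)\times\mathsf Z$; $\mathcal C$: continuous $c:S_0\to\mathbb R_+$, increasing in $w$, $0<c(w,z)\le w$, $\sup_{S_0}|u'(c(w,z),z)-u'(w,z)|<\infty$. $T$: $Tc(w,z)$ is the unique $\xi\in(0,w]$ with $u'(\xi,z)=\max\{\mathbb E_z\hat\beta\hat Ru'(c(\hat R(w-\xi)+\hat Y,\hat Z),\hat Z),u'(w,z)\}$. For each $i$, $Q_i(j,k)=\int\beta(z_{ij},z_{ik},\epsilon)R(z_{ij},z_{ik},\epsilon)^{1-\gamma_i}\pi(d\epsilon)$, $G_i:=\bar p_{ii}(\tilde P\circ Q_i)$ ($\circ$ = entrywise product), and $F_i:[1,\infty)^M\to[1,\infty)^M$, $(F_ix)(\tilde z_j)=\big(1+(G_ix)(\tilde z_j)^{1/\gamma_i}\big)^{\gamma_i}$.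 *)

From HB Require Import structures.
From mathcomp Require Import all_boot all_order all_algebra.
From mathcomp Require Import all_classical all_reals all_analysis.
From mathcomp Require Import complex.

Set Implicit Arguments.
Unset Strict Implicit.
Unset Printing Implicit Defensive.

Import Order.TTheory GRing.Theory Num.Theory.
Import numFieldNormedType.Exports.

Local Open Scope classical_set_scope.
Local Open Scope ring_scope.

(** Spectral radius of a real square matrix indexed by a finite type [T]:
    the largest modulus of its complex eigenvalues (0 if [T] is empty). *)
Definition specrad (R : realType) (T : finType) (A : T -> T -> R) : R :=
  let AC : 'M[R[i]]_#|T| :=
    \matrix_(a, b) ((A (enum_val a) (enum_val b))%:C)%C in
  sup [set complex.Re `|lam| | lam in [set lam : R[i] | eigenvalue AC lam]].

Definition stochastic (R : realType) (n : nat) (A : 'M[R]_n) : Prop :=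
  (forall a b, 0 <= A a b) /\ (forall a, \sum_b A a b = 1).

Section RiskAversionShock.
Variables (R : realType) (d : measure_display) (E : measurableType d).
Variable (pi : probability E R).
Variables (N M : nat).
Local Notation Z := ('I_N * 'I_M)%type.

(** Transition matrix P = Pbar (x) Ptil of Z_t = (Zbar_t, Ztil_t). *)
Definition Ptrans (Pbar : 'M[R]_N) (Ptil : 'M[R]_M) (z zh : Z) : R :=
  Pbar z.1 zh.1 * Ptil z.2 zh.2.

(** Marginal utility u'(c, z_{ij}) = c^{-gamma_i}, valued in extended
    reals so that u'(c) = +oo for c <= 0 (in particular at c = 0). *)
Definition uprime (gamma : 'I_N -> R) (c : R) (z : Z) : \bar R :=
  if 0 < c then (c `^ (- gamma z.1))%:E else +oo%E.

Definition epow (r theta : R) : \bar R :=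
  if 0 < r then (r `^ theta)%:E
  else if 0 < theta then 0%E else if theta == 0 then 1%E else +oo%E.

(** One-step conditional expectation E_z f(Zhat, eps_1), with Zhat ~ P(z, .)
    independent of eps_1 ~ pi. *)
Definition Ez (P : Z -> Z -> R) (f : Z -> E -> \bar R) (z : Z) : \bar R :=
  (\sum_(zh : Z) (P z zh)%:E * \int[pi]_e f zh e)%E.

Definition Kentry (P : Z -> Z -> R) (beta Rr : Z -> Z -> E -> R)
    (theta : R) (z zh : Z) : \bar R :=
  ((P z zh)%:E * \int[pi]_e ((beta z zh e)%:E * epow (Rr z zh e) theta))%E.

Definition Qentry (beta Rr : Z -> Z -> E -> R) (gamma : 'I_N -> R)
    (i : 'I_N) (j k : 'I_M) : \bar R :=
  (\int[pi]_e ((beta (i, j) (i, k) e)%:E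
                 * epow (Rr (i, j) (i, k) e) (1 - gamma i)))%E.

Definition Gentry (Pbar : 'M[R]_N) (Ptil : 'M[R]_M)
    (beta Rr : Z -> Z -> E -> R) (gamma : 'I_N -> R)
    (i : 'I_N) (j k : 'I_M) : \bar R :=
  ((Pbar i i * Ptil j k)%:E * Qentry beta Rr gamma i j k)%E.

Definition Fmap (G : 'I_M -> 'I_M -> R) (gamma_i : R) (x : 'I_M -> R)
    (j : 'I_M) : R :=
  (1 + (\sum_k G j k * x k) `^ (gamma_i^-1)) `^ gamma_i.

(** The class C of candidate consumption functions on S_0 = (0,oo) x Z
    (Z carries the discrete topology). *)
Definition in_C (gamma : 'I_N -> R) (c : R -> Z -> R) : Prop :=
  [/\ (forall z, {within `]0, +oo[, continuous (fun w => c w z)}),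
      (forall z, {in `]0, +oo[ &, {homo (fun w => c w z) : a b / a <= b}}),
      (forall w z, 0 < w -> 0 < c w z <= w) &
      (exists K : R, forall w z, 0 < w ->
         `|c w z `^ (- gamma z.1) - w `^ (- gamma z.1)| <= K)].

(** xi = Tc(w,z): xi in (0,w] and
    u'(xi,z) = max{ E_z beta R u'(c(R(w - xi) + Y, Zhat), Zhat), u'(w,z) }. *)
Definition Tcond (P : Z -> Z -> R) (beta Rr Y : Z -> Z -> E -> R)
    (gamma : 'I_N -> R) (c : R -> Z -> R) (w : R) (z : Z) (xi : R) : Prop :=
  0 < xi <= w /\
  uprime gamma xi z =
    maxe (Ez P (fun zh e =>
                 let a : R := (beta z zh e * Rr z zh e)%R in
                 let w' : R := (Rr z zh e * (w - xi) + Y z zh e)%R in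
                 (a%:E * uprime gamma (c w' zh) zh)%E) z)
         (uprime gamma w z).

End RiskAversionShock.

From HB Require Import structures.
From mathcomp Require Import all_boot all_order all_algebra.
From mathcomp Require Import all_classical all_reals all_analysis.
From mathcomp Require Import complex.
From mathcomp Require Import ring lra.
Import Order.TTheory GRing.Theory Num.Theory.
Import numFieldNormedType.Exports.
Import HBNNSimple.

Set Implicit Arguments.
Unset Strict Implicit.
Unset Printing Implicit Defensive.
Local Open Scope classical_set_scope.
Local Open Scope ring_scope.

(* If [Tc(w) = w] the ratio is [1 >= x_j^(-1/gamma_i)]. Otherwise the Euler
   equation binds: [xi^(-gamma_i) = E beta R u'(c(R (w - xi) + Y))]. Since
   [pbar_ii = 1], only the states [z_ik] are reached, where the hypothesis on
   [c] gives [c(w', z_ik) >= x_k^(-1/gamma_i) R (w - xi)]; hence the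
   expectation is at most [(w - xi)^(-gamma_i) (G_i x)(j)]. Taking
   [1/gamma_i]-th roots, [w / xi <= 1 + (G_i x)(j)^(1/gamma_i)], which is
   [x_j^(1/gamma_i)] by the fixed point equation. *)

(* Unlike [ge0_integralZl], no measurability is required: the integrand it is
   applied to involves [c], which need not be measurable. *)
Lemma ge0_le_integral_scale d (T : measurableType d) (R : realType)
    (mu : {measure set T -> \bar R}) (f g : T -> \bar R) (C : R) :
  0 < C -> (forall t, 0 <= f t)%E -> (forall t, 0 <= g t)%E ->
  (forall t, f t <= C%:E * g t)%E ->
  (\int[mu]_t f t <= C%:E * \int[mu]_t g t)%E.
Proof.
move=> C0 f0 g0 fCg.
rewrite (ge0_integralTE _ f0) (ge0_integralTE _ g0).
apply: ge_ereal_sup => _ [h /= hf <-].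
have Ci0 : 0 <= C^-1 by rewrite invr_ge0 (ltW C0).
pose h' := scale_nnsfun h Ci0.
have -> : sintegral mu h = (C%:E * sintegral mu h')%E.
  rewrite /h' (_ : (scale_nnsfun h Ci0 : T -> R) = (cst C^-1 \* h)%R) //.
  by rewrite sintegralrM muleA -EFinM mulfV ?gt_eqF ?mul1e.
apply: lee_wpmul2l; first by rewrite lee_fin (ltW C0).
apply: ereal_sup_ubound; exists h' => //= t.
have := le_trans (hf t) (fCg t).
case: (g t) => [r| |] /=; last by rewrite gt0_muleNy ?lte_fin // leeNy_eq.
  by rewrite -EFinM !lee_fin ler_pdivrMl.
by rewrite leey.
Qed.

Section powR_facts.
Variable R : realType.
Implicit Types a b g t w xi S : R.

Lemma gt0_ler_powR g : 0 < g ->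
  {in Num.nneg &, {mono @powR R ^~ g : a b / a <= b}}.
Proof. by move=> g0; apply: le_mono_in; exact: gt0_ltr_powR. Qed.

Lemma ler_powRN g a b : 0 < g -> 0 < a -> a <= b -> b `^ (- g) <= a `^ (- g).
Proof.
move=> g0 a0 ab; have b0 := lt_le_trans a0 ab.
rewrite !powRN lef_pV2 ?posrE ?powR_gt0 //.
by rewrite gt0_ler_powR // nnegrE ?(ltW a0) ?(ltW b0).
Qed.

Lemma powRNK g a : 0 < g -> 0 <= a -> (a `^ (- g^-1)) `^ (- g) = a.
Proof. by move=> g0 a0; rewrite -powRrM mulrNN mulVf ?gt_eqF ?powRr1. Qed.

Lemma powRN_le_mul g a b t : 0 < g -> 0 < a -> 0 < b -> a * b <= t ->
  t `^ (- g) <= a `^ (- g) * b `^ (- g).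
Proof.
move=> g0 a0 b0 abt.
rewrite -powRM ?(ltW a0) ?(ltW b0) //.
by apply: ler_powRN => //; rewrite mulr_gt0.
Qed.

(* With [s = S^(1/g)], the bound [xi^-g <= (w - xi)^-g S] is [w - xi <= xi s],
   i.e. [w <= (1 + s) xi]. *)
Lemma ratio_ge_of_powRN_bound g xi w S : 0 < g -> 0 < xi -> xi < w ->
  xi `^ (- g) <= (w - xi) `^ (- g) * S ->
  ((1 + S `^ g^-1) `^ g) `^ (- g^-1) <= xi / w.
Proof.
move=> g0 xi0 xiw bound.
have wxi0 : 0 < w - xi by rewrite subr_gt0.
have S0 : 0 < S.
  have := lt_le_trans (powR_gt0 (- g) xi0) bound.
  by rewrite pmulr_rgt0 // powR_gt0.
set s := S `^ g^-1.
have s0 : 0 < s by rewrite powR_gt0.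
have Ss : S = s `^ g by rewrite /s -powRrM mulVf ?gt_eqF // powRr1 // (ltW S0).
have wxis : w - xi <= xi * s.
  have nneg y : 0 < y -> y \is Num.nneg by move=> /ltW.
  rewrite -(@gt0_ler_powR g) ?nneg ?mulr_gt0 // powRM ?(ltW xi0) ?(ltW s0) //.
  move: bound; rewrite Ss !powRN [_^-1 * _]mulrC ler_pdivlMr ?powR_gt0 //.
  by rewrite ler_pdivrMl ?powR_gt0.
rewrite -powRrM mulrN mulrV ?unitfE ?gt_eqF //.
rewrite powR_inv1 ?addr_ge0 ?(ltW s0) //.
have w0 := lt_trans xi0 xiw.
by rewrite ler_pdivlMr // ler_pdivrMl ?addr_gt0 // mulrDl mul1r; lra.
Qed.

End powR_facts.

Lemma stochastic_offdiag0 (R : realType) (n : nat) (A : 'M[R]_n) (a b : 'I_n) :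
  stochastic A -> A a a = 1 -> b != a -> A a b = 0.
Proof.
move=> [A0 A1] Aaa ba.
have : \sum_(k | k != a) A a k = 0 by move: (A1 a); rewrite (bigD1 a) //= Aaa; lra.
by move/psumr_eq0P; apply => // k _; exact: A0.
Qed.

Lemma maxe_eq_gtr (R : realType) (a b m : \bar R) :
  maxe a b = m -> (b < m)%E -> a = m.
Proof.
move=> abm bm; have [ab|/ltW ba] := leP a b.
  by move: bm; rewrite -abm max_r // ltxx.
by rewrite -abm max_l.
Qed.

Section model.
Variables (R : realType) (d : measure_display) (E : measurableType d).
Variable pi : probability E R.
Variables (N M : nat) (gamma : 'I_N -> R).
Local Notation Z := ('I_N * 'I_M)%type.

Lemma uprime_ge0 t (z : Z) : (0 <= uprime gamma t z)%E.
Proof. by rewrite /uprime; case: ifP => _; rewrite ?lee_fin ?powR_ge0 ?leey. Qed.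

Lemma epow_ge0 (r theta : R) : (0 <= epow r theta)%E.
Proof.
rewrite /epow; case: ifP => _; first by rewrite lee_fin powR_ge0.
by case: ifP => _ //; case: ifP => _ //; rewrite leey.
Qed.

(* Below [w], u' is strictly above u'(w), so the max in the definition of [T]
   is attained by the expectation: the Euler equation binds. *)
Lemma Tcond_euler (P : Z -> Z -> R) (beta Rr Y : Z -> Z -> E -> R)
    (c : R -> Z -> R) w z xi :
  0 < gamma z.1 -> Tcond pi P beta Rr Y gamma c w z xi -> xi < w ->
  Ez pi P (fun zh e => ((beta z zh e * Rr z zh e)%R%:E
             * uprime gamma (c (Rr z zh e * (w - xi) + Y z zh e)%R zh) zh)%E) z
  = uprime gamma xi z.
Proof.
move=> g0 [/andP[xi0 _] Teq] xiw; have w0 := lt_trans xi0 xiw.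
apply: maxe_eq_gtr (esym Teq) _.
rewrite /uprime xi0 w0 lte_fin !powRN ltf_pV2 ?posrE ?powR_gt0 //.
by rewrite (gt0_ltr_powR g0) // nnegrE ?(ltW xi0) ?(ltW w0).
Qed.

Section absorbing_risk_aversion.
Variables (Pbar : 'M[R]_N) (Ptil : 'M[R]_M) (beta Rr Y : Z -> Z -> E -> R).
Variables (c : R -> Z -> R) (i : 'I_N) (x : 'I_M -> R).
Hypotheses (hPbar : stochastic Pbar) (hpii : Pbar i i = 1).
Hypothesis Ptil_ge0 : forall j k, 0 <= Ptil j k.
Hypotheses (beta_ge0 : forall z zh e, 0 <= beta z zh e)
  (Rr_ge0 : forall z zh e, 0 <= Rr z zh e) (Y_ge0 : forall z zh e, 0 <= Y z zh e).
Hypothesis gamma_gt0 : 0 < gamma i.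
Hypothesis x_ge1 : forall k, 1 <= x k.
Hypothesis c_gt0 : forall w k, 0 < w -> 0 < c w (i, k).
Hypothesis c_ge : forall w k, 0 < w -> x k `^ (- (gamma i)^-1) <= c w (i, k) / w.

Lemma Ez_absorbing (f : Z -> E -> \bar R) j :
  Ez pi (Ptrans Pbar Ptil) f (i, j) =
  (\sum_k (Ptil j k)%:E * \int[pi]_e f (i, k) e)%E.
Proof.
transitivity (\sum_a \sum_k
    (Ptrans Pbar Ptil (i, j) (a, k))%:E * \int[pi]_e f (a, k) e)%E.
  by rewrite pair_bigA; apply: eq_bigr => -[].
rewrite (bigD1 i) //= [X in (_ + X)%E]big1 ?adde0 => [|a ai].
  by apply: eq_bigr => k _; rewrite /Ptrans hpii mul1r.
by apply: big1 => k _; rewrite /Ptrans (stochastic_offdiag0 hPbar hpii ai) mul0r mul0e.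
Qed.

Lemma euler_integrand_le k w xi (b r y : R) :
  0 <= b -> 0 <= r -> 0 <= y -> xi < w ->
  ((b * r)%:E * uprime gamma (c (r * (w - xi) + y) (i, k)) (i, k)
   <= ((w - xi) `^ (- gamma i) * x k)%:E * (b%:E * epow r (1 - gamma i)))%E.
Proof.
move=> b0 r0 y0 xiw; have wxi0 : 0 < w - xi by rewrite subr_gt0.
have x0 : 0 <= x k := le_trans ler01 (x_ge1 k).
have [->|rn0] := eqVneq r 0.
  rewrite mulr0 mul0e; apply: mule_ge0; last apply: mule_ge0.
  - by rewrite lee_fin mulr_ge0 ?powR_ge0.
  - by rewrite lee_fin.
  - exact: epow_ge0.
have {rn0 r0}r0 : 0 < r by rewrite lt_neqAle eq_sym rn0.
have rw_le : r * (w - xi) <= r * (w - xi) + y by rewrite lerDl.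
have w'0 := lt_le_trans (mulr_gt0 r0 wxi0) rw_le.
set a := x k `^ (- (gamma i)^-1).
have a0 : 0 < a by rewrite powR_gt0 // (lt_le_trans ltr01 (x_ge1 k)).
have c_lower : a * (r * (w - xi)) <= c (r * (w - xi) + y) (i, k).
  apply: le_trans (ler_wpM2l (ltW a0) rw_le) _.
  by rewrite -ler_pdivlMr // c_ge.
have := powRN_le_mul gamma_gt0 a0 (mulr_gt0 r0 wxi0) c_lower.
rewrite powRNK // powRM ?(ltW r0) ?(ltW wxi0) // => cN_le.
rewrite /uprime /epow c_gt0 //= r0 -!EFinM lee_fin.
have -> : r `^ (1 - gamma i) = r * r `^ (- gamma i).
  by rewrite powRD ?(gt_eqF r0) ?implybT // powRr1 // (ltW r0).
apply: le_trans (ler_wpM2l (mulr_ge0 b0 (ltW r0)) cN_le) _.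
by rewrite le_eqVlt; apply/orP; left; apply/eqP; ring.
Qed.

Lemma euler_expectation_le j w xi : xi < w ->
  (forall k, Gentry pi Pbar Ptil beta Rr gamma i j k \is a fin_num) ->
  (Ez pi (Ptrans Pbar Ptil) (fun zh e =>
      (beta (i, j) zh e * Rr (i, j) zh e)%R%:E
      * uprime gamma (c (Rr (i, j) zh e * (w - xi) + Y (i, j) zh e)%R zh) zh)
     (i, j)
   <= ((w - xi) `^ (- gamma i)
       * \sum_k fine (Gentry pi Pbar Ptil beta Rr gamma i j k) * x k)%:E)%E.
Proof.
move=> xiw G_fin; rewrite Ez_absorbing mulr_sumr -sumEFin; apply: lee_sum => k _.
have C0 : 0 < (w - xi) `^ (- gamma i) * x k.
  by rewrite mulr_gt0 ?powR_gt0 ?subr_gt0 // (lt_le_trans ltr01 (x_ge1 k)).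
rewrite mulrCA EFinM (fineK (G_fin k)) /Gentry hpii mul1r -muleA.
apply: lee_wpmul2l; first by rewrite lee_fin Ptil_ge0.
rewrite muleC; apply: ge0_le_integral_scale => // [e|e|e].
- by rewrite mule_ge0 ?uprime_ge0 // lee_fin mulr_ge0.
- by rewrite mule_ge0 ?epow_ge0 // lee_fin.
- exact: euler_integrand_le.
Qed.

End absorbing_risk_aversion.

End model.

Theorem lemmaD1
  (R : realType) (d : measure_display) (E : measurableType d)
  (pi : probability E R) (N M : nat)
  (Pbar : 'M[R]_N) (Ptil : 'M[R]_M)
  (beta Rr Y : 'I_N * 'I_M -> 'I_N * 'I_M -> E -> R)
  (gamma : 'I_N -> R)
  (* the setting *)
  (hPbar : stochastic Pbar) (hPtil : stochastic Ptil)
  (hbeta0 : forall z zh e, 0 <= beta z zh e)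
  (hR0 : forall z zh e, 0 <= Rr z zh e)
  (hY0 : forall z zh e, 0 <= Y z zh e)
  (hbetam : forall z zh, measurable_fun setT (beta z zh))
  (hRm : forall z zh, measurable_fun setT (Rr z zh))
  (hYm : forall z zh, measurable_fun setT (Y z zh))
  (hgamma0 : forall a, 0 < gamma a)
  (hgamma_mono : forall a b : 'I_N, (a < b)%N -> gamma a < gamma b)
  (* Assumption 2 (a) *)
  (A2a1 : forall z, (Ez pi (Ptrans Pbar Ptil)
            (fun zh e => uprime gamma (Y z zh e) zh) z < +oo)%E)
  (A2a2 : forall z, (Ez pi (Ptrans Pbar Ptil)
            (fun zh e => (beta z zh e * Rr z zh e)%R%:E
                         * uprime gamma (Y z zh e) zh) z < +oo)%E)
  (* Assumption 2 (b): r(K(1)) < 1 (entries of K(1) finite) *)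
  (A2b_fin : forall z zh,
      Kentry pi (Ptrans Pbar Ptil) beta Rr 1 z zh \is a fin_num)
  (A2b : specrad (fun z zh => fine (Kentry pi (Ptrans Pbar Ptil) beta Rr 1 z zh))
         < 1)
  (* the fixed index i *)
  (i : 'I_N) (hpii : Pbar i i = 1)
  (hG_fin : forall j k, Gentry pi Pbar Ptil beta Rr gamma i j k \is a fin_num)
  (hG : specrad (fun j k => fine (Gentry pi Pbar Ptil beta Rr gamma i j k)) < 1)
  (* x_i^* : the fixed point of F_i in [1,oo)^M *)
  (x : 'I_M -> R) (hx1 : forall j, 1 <= x j)
  (hxfix : forall j,
      Fmap (fun j k => fine (Gentry pi Pbar Ptil beta Rr gamma i j k))
           (gamma i) x j = x j)
  (* the candidate consumption function *)
  (c : R -> 'I_N * 'I_M -> R) (hc : in_C gamma c)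
  (hcx : forall w j, 0 < w -> x j `^ (- (gamma i)^-1) <= c w (i, j) / w) :
  forall (w : R) (j : 'I_M) (xi : R), 0 < w ->
    Tcond pi (Ptrans Pbar Ptil) beta Rr Y gamma c w (i, j) xi ->
    x j `^ (- (gamma i)^-1) <= xi / w.
Proof.
move=> w j xi w0 Tc; have gi0 := hgamma0 i.
have [xi_w|xiw] := eqVneq xi w.
  rewrite xi_w divff ?gt_eqF // -(powRr0 (x j)).
  by apply: (ler_powR (hx1 j)); rewrite oppr_le0 invr_ge0 (ltW gi0).
have {xiw}xiw : xi < w by rewrite lt_neqAle xiw; case: Tc => /andP[_ ->].
have [/andP[xi0 _] _] := Tc.
have c_gt0 w' k : 0 < w' -> 0 < c w' (i, k).
  by case: hc => _ _ /(_ w' (i, k)) c_in _ /c_in /andP[].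
have := euler_expectation_le hPbar hpii hPtil.1 hbeta0 hR0 hY0 gi0 hx1 c_gt0 hcx
  xiw (hG_fin j).
rewrite (Tcond_euler gi0 Tc xiw) /uprime xi0 lee_fin => bound.
by rewrite -(hxfix j); exact: ratio_ge_of_powRN_bound bound.
Qed.
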